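(* Let $\Lambda=\mathcal I(\Lambda_1,\dots,\Lambda_M)$ be an interconnected dt-SCS with coupling matrix $\mathcal M$, and let $\hat\Lambda=\mathcal I(\hat\Lambda_1,\dots,\hat\Lambda_M)$ be the interconnection of the finite MDPs $\hat\Lambda_i$ with the same coupling. Suppose that for each $i\in\{1,\dots,M\}$, $\mathcal S_i(\kappa_i,\cdot,\cdot)$ is an SStF between $\hat\Lambda_i$ and $\Lambda_i$ with constants $\gamma_i>0$, $\alpha_i\in(0,1)$, $\varpi_i\ge0$ and symmetric matrix $\mathcal Z_i=\begin{bmatrix}\mathcal Z_i^{11}&\mathcal Z_i^{12}\\ \mathcal Z_i^{21}&\mathcal Z_i^{22}\end{bmatrix}$, holding with confidence at least $1-\beta_i$, $\beta_i=\beta_{1_i}+\beta_{2_i}$ (i.e. $\mathbb P\{\hat\Lambda_i\cong_{\mathcal S_i}\Lambda_i\}\ge1-\beta_i$). If $$\begin{bmatrix}\mathcal M\\ \mathbb I\end{bmatrix}^\top\mathcal Z_{cmp}\begin{bmatrix}\mathcal M\\ \mathbb I\end{bmatrix}\preceq0,\qquad \mathcal Z_{cmp}:=\begin{bmatrix}\mathrm{diag}(\mathcal Z_1^{11},\dots,\mathcal Z_M^{11})&\mathrm{diag}(\mathcal Z_1^{12},\dots,\mathcal Z_M^{12})\\ \mathrm{diag}(\mathcal Z_1^{21},\dots,\mathcal Z_M^{21})&\mathrm{diag}(\mathcal Z_1^{22},\dots,\mathcal Z_M^{22})\end{bmatrix},$$ then $\mathcal V(\kappa,x,\hat x):=\sum_{i=1}^M\mathcal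 S_i(\kappa_i,x_i,\hat x_i)$ is an SBF between $\hat\Lambda$ and $\Lambda$ with $\gamma=\big(\sum_{i=1}^M1/\gamma_i\big)^{-1}$, $\alpha=\max_i\alpha_i$, $\varpi=\sum_{i=1}^M\varpi_i$, with confidence at least $1-\sum_{i=1}^M\beta_i$.
   Context: A dt-SCS is $\Lambda_i=(X_i,U_i,D_i,\varsigma_i,f_i)$: Borel state set $X_i\subseteq\mathbb R^{n_i}$, finite input set $U_i$, Borel disturbance set $D_i$, i.i.d. noise $\varsigma_i$, map $f_i$, $x_i(k+1)=f_i(x_i(k),\nu_i(k),d_i(k),\varsigma_i(k))$. Its finite MDP $\hat\Lambda_i=(\hat X_i,U_i,\hat D_i,\varsigma_i,\hat f_i)$ has finite $\hat X_i\subset X_i$, $\hat D_i\subset D_i$, $\hat f_i(\hat x_i,\nu_i,\hat d_i,\varsigma_i)=\mathcal P_{x_i}(f_i(\hat x_i,\nu_i,\hat d_i,\varsigma_i))$ with quantization $\|\mathcal P_{x_i}(x)-x\|\le\rho_i$. The interconnection $\mathcal I(\Lambda_1,\dots,\Lambda_M)=(X,U,f,\varsigma)$ has $X=\prod X_i$, $U=\prod U_i$, $f=[f_1;\dots;f_M]$, $\varsigma=[\varsigma_1;\dots;\varsigma_M]$ and disturbances fixed by $[d_1;\dots;d_M]=\mathcal M[x_1;\dots;x_M]$ (and likewise $[\hat d_1;\dots;\hat d_M]=\mathcal M[\hat x_1;\dots;\hat x_M]$ for $\hat\Lambda$), yielding $x(k+1)=f(x(k),\nu(k),\varsigma(k))$.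 SStF: $\mathcal S:X_i\times\hat X_i\to\mathbb R_{\ge0}$ with $\hat\Lambda_i\cong_{\mathcal S}\Lambda_i$ if (i) $\gamma\|x-\hat x\|^2\le\mathcal S(x,\hat x)$ for all $x,\hat x$; (ii) for all $x,\hat x,\nu,d,\hat d$: $\mathbb E[\mathcal S(f(x,\nu,d,\varsigma),\hat f(\hat x,\nu,\hat d,\varsigma))\mid x,\hat x,\nu,d,\hat d]\le\alpha\mathcal S(x,\hat x)+\varpi+[d-\hat d;x-\hat x]^\top\mathcal Z[d-\hat d;x-\hat x]$. SBF: for interconnected $\Lambda$ and $\hat\Lambda$ (no external disturbances), $\mathcal V:X\times\hat X\to\mathbb R_{\ge0}$ with $\hat\Lambda\cong_{\mathcal V}\Lambda$ if for some $\gamma>0$, $0<\alpha<1$, $\varpi\ge0$: (i) $\gamma\|x-\hat x\|^2\le\mathcal V(x,\hat x)$; (ii) $\mathbb E[\mathcal V(f(x,\nu,\varsigma),\hat f(\hat x,\nu,\varsigma))\mid x,\hat x,\nu]\le\alpha\mathcal V(x,\hat x)+\varpi$ for all $x\in X,\hat x\in\hat X,\nu\in U$. $\mathbb I$ is the identity of appropriate size and $\preceq0$ means negative semidefinite. *)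

From HB Require Import structures.
From mathcomp Require Import all_boot all_order all_algebra.
From mathcomp Require Import all_classical all_reals all_analysis.
Set Implicit Arguments. Unset Strict Implicit. Unset Printing Implicit Defensive.
Import Order.TTheory GRing.Theory Num.Theory.
Local Open Scope classical_set_scope.
Local Open Scope ring_scope.

Definition sqnorm {R : realType} {n : nat} (v : 'cV[R]_n) : R :=
  \sum_(j < n) (v j 0) ^+ 2.

Definition qform {R : realType} {n : nat} (Z : 'M[R]_n) (v : 'cV[R]_n) : R :=
  (v^T *m Z *m v) 0 0.

Definition nsd {R : realType} {n : nat} (A : 'M[R]_n) : Prop :=
  forall v : 'cV[R]_n, qform A v <= 0.

(* Block-diagonal matrix diag(B_1,...,B_m) with possibly rectangular blocks
   (same construction as MathComp's \mxdiag, which only allows square blocks). *)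
Definition mxdiag_rect {V : zmodType} {m : nat} {p_ q_ : 'I_m -> nat}
  (B_ : forall i, 'M[V]_(p_ i, q_ i)) : 'M[V]_(\sum_i p_ i, \sum_i q_ i) :=
  \mxblock_(j, k) if j == k then conform_mx 0 (B_ j) else 0.

(* Stochastic simulation function (SStF) S between a finite MDP (state set Xh,
   disturbance set Dh, map fh) and a dt-SCS (X, D, f), with inputs in the finite
   type U, noise sig : Omega -> Xi distributed according to P.
   Z is a (p+n)x(p+n) matrix acting on [d - dh; x - xh]. *)
Definition is_SStF {R : realType} {dO : measure_display} {Omega : measurableType dO}
  (P : probability Omega R) {n p : nat} {U : finType} {Xi : Type}
  (sig : Omega -> Xi)
  (X Xh : set 'cV[R]_n) (D Dh : set 'cV[R]_p)
  (f fh : 'cV[R]_n -> U -> 'cV[R]_p -> Xi -> 'cV[R]_n)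
  (S : 'cV[R]_n -> 'cV[R]_n -> R) (gamma alpha varpi : R) (Z : 'M[R]_(p + n))
  : Prop :=
  (forall x xh, X x -> Xh xh -> gamma * sqnorm (x - xh) <= S x xh) /\
  (forall x xh (nu : U) d dh, X x -> Xh xh -> D d -> Dh dh ->
     (\int[P]_w (S (f x nu d (sig w)) (fh xh nu dh (sig w)))%:E
      <= (alpha * S x xh + varpi + qform Z (col_mx (d - dh) (x - xh)))%:E)%E).

(* Stochastic bisimulation function (SBF) V between an interconnected finite MDP
   (Xh, Fh) and an interconnected dt-SCS (X, F) without external disturbances;
   the noise is the outcome w of the probability space P. *)
Definition is_SBF {R : realType} {dO : measure_display} {Omega : measurableType dO}
  (P : probability Omega R) {N : nat} {U : Type}
  (X Xh : set 'cV[R]_N)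
  (F Fh : 'cV[R]_N -> U -> Omega -> 'cV[R]_N)
  (V : 'cV[R]_N -> 'cV[R]_N -> R) (gamma alpha varpi : R) : Prop :=
  [/\ 0 < gamma, 0 < alpha < 1, 0 <= varpi,
      (forall x xh, X x -> Xh xh -> gamma * sqnorm (x - xh) <= V x xh) &
      (forall x xh (nu : U), X x -> Xh xh ->
         (\int[P]_w (V (F x nu w) (Fh xh nu w))%:E
          <= (alpha * V x xh + varpi)%:E)%E)].

(* Interconnection I(Lambda_1,...,Lambda_M) with coupling matrix Mc:
   the stacked state x = [x_1;...;x_M], d = Mc x, d_i = i-th block of d,
   noise [sig_1;...;sig_M] realised on the common outcome w. *)
Definition interconnect {R : realType} {Omega : Type} {M : nat}
  {n p : 'I_M -> nat} {U : 'I_M -> finType} {Xi : 'I_M -> Type}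
  (sig : forall i, Omega -> Xi i)
  (f : forall i, 'cV[R]_(n i) -> U i -> 'cV[R]_(p i) -> Xi i -> 'cV[R]_(n i))
  (Mc : 'M[R]_(\sum_i p i, \sum_i n i))
  (x : 'cV[R]_(\sum_i n i)) (nu : forall i, U i) (w : Omega) : 'cV[R]_(\sum_i n i) :=
  \mxcol_i f i (submxcol x i) (nu i) (submxcol (Mc *m x) i) (sig i w).

Definition prod_set {R : realType} {M : nat} {n : 'I_M -> nat}
  (X : forall i, set 'cV[R]_(n i)) : set 'cV[R]_(\sum_i n i) :=
  [set x | forall i, X i (submxcol x i)].

(* The lower bound
     follows blockwise from gamma <= gamma_i; the decay bound follows by
     linearity of expectation, the local decay bounds, and the LMI applied to
     x - xh, which kills the sum of the interconnection terms.
   - Probability: by a union bound, finitely many events of probabilities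
     >= 1 - beta_i intersect in an event of probability >= 1 - \sum_i beta_i.
   The main theorem intersects the confidence events of the M subsystems and
   applies the composition result on that intersection, with the abstract
   transition map Pq_i o f_i. *)
From HB Require Import structures.
From mathcomp Require Import all_boot all_order all_algebra.
From mathcomp Require Import all_classical all_reals all_analysis.
From mathcomp Require Import lra.
Import Order.TTheory GRing.Theory Num.Theory.
Local Open Scope classical_set_scope.
Local Open Scope ring_scope.

Lemma probability_setI_ge {R : realType} {d : measure_display}
  {T : measurableType d} (P : probability T R) {A B : set T} {a b : R} :
  measurable A -> measurable B -> (a%:E <= P A)%E -> (b%:E <= P B)%E ->
  ((a + b - 1)%:E <= P (A `&` B))%E.
Proof.
move=> mA mB aA bB.
have finP C : measurable C -> P C = (fine (P C))%:E.
  by move=> mC; rewrite fineK // fin_num_measure.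
have PU : (P (A `|` B) = P A + P B - P (A `&` B))%E.
  by apply: measureUfinl => //; rewrite ltey_eq fin_num_measure.
have := probability_le1 P (measurableU _ _ mA mB).
move: aA bB; rewrite PU (finP _ mA) (finP _ mB) (finP _ (measurableI _ _ mA mB)).
rewrite -EFinN -!EFinD !lee_fin; lra.
Qed.

Lemma probability_bigcap_ge {R : realType} {d : measure_display}
  {T : measurableType d} (P : probability T R) {I : Type} (A : I -> set T)
  (beta : I -> R) (r : seq I) :
  (forall i, measurable (A i)) -> (forall i, ((1 - beta i)%:E <= P (A i))%E) ->
  measurable (\big[setI/setT]_(i <- r) A i) /\
  ((1 - \sum_(i <- r) beta i)%:E <= P (\big[setI/setT]_(i <- r) A i))%E.
Proof.
move=> mA PA; elim: r => [|i r [mr Pr]].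
  by rewrite !big_nil probability_setT subr0.
rewrite !big_cons; split; first exact: measurableI.
have := probability_setI_ge P (mA i) mr (PA i) Pr.
by congr (_ <= _)%E; congr EFin; lra.
Qed.

Lemma in_bigcap {T : Type} {I : eqType} {A : I -> set T} {r : seq I} {t : T} :
  (\big[setI/setT]_(i <- r) A i) t -> forall i, i \in r -> A i t.
Proof.
elim: r => [//|j r IHr]; rewrite big_cons => -[Aj Ar] i.
by rewrite inE => /predU1P[->//|]; apply: IHr.
Qed.

Lemma qform_block {R : realType} {m1 m2 : nat} (A : 'M[R]_m1)
  (B : 'M[R]_(m1, m2)) (C : 'M[R]_(m2, m1)) (D : 'M[R]_m2)
  (a : 'cV[R]_m1) (b : 'cV[R]_m2) :
  qform (block_mx A B C D) (col_mx a b) =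
  qform A a + (a^T *m B *m b) 0 0 + (b^T *m C *m a) 0 0 + qform D b.
Proof.
rewrite /qform tr_col_mx mul_row_block mul_row_col !mulmxDl !mxE; lra.
Qed.

Lemma qform_congr {R : realType} {k m : nat} (B : 'M[R]_k) (C : 'M[R]_(k, m))
  (v : 'cV[R]_m) :
  qform (C^T *m B *m C) v = qform B (C *m v).
Proof. by rewrite /qform trmx_mul !mulmxA. Qed.

Lemma bilin_mxdiag_rect {R : realType} {m : nat} {p q : 'I_m -> nat}
  (B : forall i, 'M[R]_(p i, q i)) (u : 'cV[R]_(\sum_i p i))
  (w : 'cV[R]_(\sum_i q i)) :
  (u^T *m mxdiag_rect B *m w) 0 0 =
  \sum_i ((submxcol u i)^T *m B i *m submxcol w i) 0 0.
Proof.
rewrite -[u]submxcolK -[w]submxcolK tr_mxcol -mulmxA /mxdiag_rect.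
rewrite mul_mxblock_mxrow mul_mxrow_mxcol summxE; apply: eq_bigr => i _.
rewrite !mxcolK (bigD1 i) //= eqxx conform_mx_id big1 ?addr0 ?mulmxA //.
by move=> j; case: eqVneq => //= _ _; rewrite mul0mx.
Qed.

Lemma mxdiagE {R : realType} {m : nat} {p : 'I_m -> nat}
  (B : forall i, 'M[R]_(p i)) : \mxdiag_i B i = mxdiag_rect B.
Proof. by []. Qed.

(* The quadratic form of the compositionality matrix at v is the sum of the
   local forms of the Z_i at the local disturbance/state pair
   [(Mc v)_i; v_i]; this is where the coupling d = Mc x enters. *)
Lemma qform_compositional {R : realType} {m : nat} {p n : 'I_m -> nat}
  (Mc : 'M[R]_(\sum_i p i, \sum_i n i)) (Z : forall i, 'M[R]_(p i + n i))
  (v : 'cV[R]_(\sum_i n i)) :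
  qform ((col_mx Mc 1%:M)^T *m
        block_mx (\mxdiag_i ulsubmx (Z i)) (mxdiag_rect (fun i => ursubmx (Z i)))
                 (mxdiag_rect (fun i => dlsubmx (Z i))) (\mxdiag_i drsubmx (Z i))
       *m col_mx Mc 1%:M) v =
  \sum_i qform (Z i) (col_mx (submxcol (Mc *m v) i) (submxcol v i)).
Proof.
rewrite qform_congr mul_col_mx mul1mx qform_block !mxdiagE /qform.
rewrite !bilin_mxdiag_rect -!big_split /=; apply: eq_bigr => i _.
have := qform_block (ulsubmx (Z i)) (ursubmx (Z i)) (dlsubmx (Z i))
  (drsubmx (Z i)) (submxcol (Mc *m v) i) (submxcol v i).
by rewrite submxK /qform => ->.
Qed.

Lemma sqnormE {R : realType} {k : nat} (v : 'cV[R]_k) :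
  sqnorm v = (v^T *m v) 0 0.
Proof. by rewrite /sqnorm !mxE; apply: eq_bigr => j _; rewrite !mxE expr2. Qed.

Lemma sqnorm_mxcol {R : realType} {m : nat} {p : 'I_m -> nat}
  (v : 'cV[R]_(\sum_i p i)) :
  sqnorm v = \sum_i sqnorm (submxcol v i).
Proof.
rewrite sqnormE -[v]submxcolK tr_mxcol mul_mxrow_mxcol summxE.
by apply: eq_bigr => i _; rewrite sqnormE mxcolK.
Qed.

Lemma sqnorm_ge0 {R : realType} {k : nat} (v : 'cV[R]_k) : 0 <= sqnorm v.
Proof. by apply: sumr_ge0 => j _; apply: sqr_ge0. Qed.

Section Composition.
Variables (R : realType) (dO : measure_display) (Omega : measurableType dO).
Variable Pn : probability Omega R.
Variables (M : nat) (n p : 'I_M -> nat) (U : 'I_M -> finType) (Xi : 'I_M -> Type).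
Variable sig : forall i, Omega -> Xi i.
Variables (X Xh : forall i, set 'cV[R]_(n i)) (D Dh : forall i, set 'cV[R]_(p i)).
Variables f fh : forall i, 'cV[R]_(n i) -> U i -> 'cV[R]_(p i) -> Xi i -> 'cV[R]_(n i).
Variable Mc : 'M[R]_(\sum_i p i, \sum_i n i).
Variable Ssim : forall i, 'cV[R]_(n i) -> 'cV[R]_(n i) -> R.
Variables (gamma alpha varpi : 'I_M -> R) (Z : forall i, 'M[R]_(p i + n i)).

Hypothesis M_gt0 : (0 < M)%N.
Hypothesis f_X : forall i x nu d s, X i x -> D i d -> X i (f i x nu d s).
Hypothesis fh_Xh : forall i xh nu dh s, Xh i xh -> Dh i dh -> Xh i (fh i xh nu dh s).
Hypothesis coupling_D : forall x, prod_set X x -> forall i, D i (submxcol (Mc *m x) i).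
Hypothesis coupling_Dh :
  forall xh, prod_set Xh xh -> forall i, Dh i (submxcol (Mc *m xh) i).
Hypothesis Ssim_measurable : forall i x xh nu d dh, X i x -> Xh i xh -> D i d -> Dh i dh ->
  measurable_fun [set: Omega]
    (fun w => Ssim i (f i x nu d (sig i w)) (fh i xh nu dh (sig i w))).
Hypothesis gamma_gt0 : forall i, 0 < gamma i.
Hypothesis alpha_in01 : forall i, 0 < alpha i < 1.
Hypothesis varpi_ge0 : forall i, 0 <= varpi i.
Hypothesis Ssim_SStF : forall i,
  is_SStF Pn (sig i) (X i) (Xh i) (D i) (Dh i) (f i) (fh i) (Ssim i)
    (gamma i) (alpha i) (varpi i) (Z i).
Hypothesis compositional_LMI :
  nsd ((col_mx Mc 1%:M)^T *m
        block_mx (\mxdiag_i ulsubmx (Z i)) (mxdiag_rect (fun i => ursubmx (Z i)))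
                 (mxdiag_rect (fun i => dlsubmx (Z i))) (\mxdiag_i drsubmx (Z i))
       *m col_mx Mc 1%:M).

Let V (x xh : 'cV[R]_(\sum_i n i)) : R :=
  \sum_i Ssim i (submxcol x i) (submxcol xh i).
Let gammaV : R := (\sum_i (gamma i)^-1)^-1.
Let alphaV : R := \big[Order.max/0]_i alpha i.

Let i0 : 'I_M := Ordinal M_gt0.

Lemma SStF_ge0 i x xh : X i x -> Xh i xh -> 0 <= Ssim i x xh.
Proof.
move=> Xx Xhx; apply: le_trans ((Ssim_SStF i).1 _ _ Xx Xhx).
by rewrite mulr_ge0 ?sqnorm_ge0 ?ltW.
Qed.

Lemma gammaV_gt0 : 0 < gammaV.
Proof.
rewrite invr_gt0 (bigD1 i0) //= ltr_wpDr ?invr_gt0 //.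
by apply: sumr_ge0 => i _; rewrite invr_ge0 ltW.
Qed.

Lemma gammaV_le i : gammaV <= gamma i.
Proof.
rewrite -[gamma i]invrK lef_pV2 ?posrE ?invr_gt0 //.
  by rewrite (bigD1 i) //= lerDl; apply: sumr_ge0 => j _; rewrite invr_ge0 ltW.
by move: gammaV_gt0; rewrite /gammaV invr_gt0.
Qed.

Lemma alphaV_in01 : 0 < alphaV < 1.
Proof.
apply/andP; split.
  by apply: lt_le_trans (le_bigmax _ _ i0); case/andP: (alpha_in01 i0).
by apply: bigmax_lt => // i _; case/andP: (alpha_in01 i).
Qed.

Lemma V_lower_bound x xh : prod_set X x -> prod_set Xh xh ->
  gammaV * sqnorm (x - xh) <= V x xh.
Proof.
move=> Xx Xhx; rewrite sqnorm_mxcol mulr_sumr; apply: ler_sum => i _.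
rewrite submxcolB; apply: le_trans ((Ssim_SStF i).1 _ _ (Xx i) (Xhx i)).
by rewrite ler_wpM2r ?sqnorm_ge0 ?gammaV_le.
Qed.

(* By linearity, the expectation of V after
   one step is the sum of the local expectations; each is bounded by the
   SStF decay of S_i at the coupled disturbances d = Mc x, dh = Mc xh, and the
   interconnection terms add up to the compositionality form at x - xh, which
   is nonpositive. *)
Lemma V_decay x xh (nu : forall i, U i) : prod_set X x -> prod_set Xh xh ->
  (\int[Pn]_w (V (interconnect sig f Mc x nu w)
                 (interconnect sig fh Mc xh nu w))%:E
   <= (alphaV * V x xh + \sum_i varpi i)%:E)%E.
Proof.
move=> Xx Xhx.
pose d i := submxcol (Mc *m x) i; pose dh i := submxcol (Mc *m xh) i.
pose g i w := Ssim i (f i (submxcol x i) (nu i) (d i) (sig i w))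
                  (fh i (submxcol xh i) (nu i) (dh i) (sig i w)).
have Dd := coupling_D _ Xx; have Dhdh := coupling_Dh _ Xhx.
have g_ge0 i w : 0 <= g i w by apply: SStF_ge0; [exact: f_X | exact: fh_Xh].
have V_step w : V (interconnect sig f Mc x nu w) (interconnect sig fh Mc xh nu w)
              = \sum_i g i w.
  by apply: eq_bigr => i _; rewrite /interconnect !mxcolK.
under eq_integral do rewrite V_step -sumEFin.
rewrite ge0_integral_sum //; last 2 first.
- by move=> i; apply/measurable_realfun.measurable_EFinP; apply: Ssim_measurable.
- by move=> i w _; rewrite lee_fin.
apply: le_trans.
  by apply: lee_sum => i _; apply: (Ssim_SStF i).2.
rewrite sumEFin lee_fin !big_split /=.
have LMI_x := compositional_LMI (x - xh); rewrite qform_compositional in LMI_x.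
have -> : \sum_i qform (Z i) (col_mx (d i - dh i) (submxcol x i - submxcol xh i))
        = \sum_i qform (Z i) (col_mx (submxcol (Mc *m (x - xh)) i)
                                     (submxcol (x - xh) i)).
  by apply: eq_bigr => i _; rewrite mulmxBr !submxcolB.
have alpha_max : \sum_i alpha i * Ssim i (submxcol x i) (submxcol xh i)
                 <= alphaV * V x xh.
  rewrite /V mulr_sumr; apply: ler_sum => i _.
  by rewrite ler_wpM2r ?SStF_ge0 ?le_bigmax.
lra.
Qed.

Lemma sum_SStF_is_SBF :
  is_SBF Pn (prod_set X) (prod_set Xh) (interconnect sig f Mc)
    (interconnect sig fh Mc) V gammaV alphaV (\sum_i varpi i).
Proof.
split; [exact: gammaV_gt0 | exact: alphaV_in01 | exact: sumr_ge0 |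
        exact: V_lower_bound | exact: V_decay].
Qed.

End Composition.

Theorem mainTheorem5
  (R : realType)
  (* noise probability space *)
  (dO : measure_display) (Omega : measurableType dO) (Pn : probability Omega R)
  (* data probability space (randomness of the parameters kappa_i) *)
  (dT : measure_display) (Theta : measurableType dT) (Pd : probability Theta R)
  (M : nat) (n p : 'I_M -> nat)
  (U : 'I_M -> finType) (Xi : 'I_M -> Type) (sig : forall i, Omega -> Xi i)
  (X Xh : forall i, set 'cV[R]_(n i)) (D Dh : forall i, set 'cV[R]_(p i))
  (f : forall i, 'cV[R]_(n i) -> U i -> 'cV[R]_(p i) -> Xi i -> 'cV[R]_(n i))
  (Pq : forall i, 'cV[R]_(n i) -> 'cV[R]_(n i)) (rho : 'I_M -> R)
  (Mc : 'M[R]_(\sum_i p i, \sum_i n i))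
  (K : 'I_M -> Type) (kappa : forall i, Theta -> K i)
  (S : forall i, K i -> 'cV[R]_(n i) -> 'cV[R]_(n i) -> R)
  (gamma alpha varpi beta1 beta2 : 'I_M -> R)
  (Z : forall i, 'M[R]_(p i + n i)) :
  (0 < M)%N ->
  (* dt-SCS Lambda_i and its finite MDP hat Lambda_i *)
  (forall i x nu d s, X i x -> D i d -> X i (f i x nu d s)) ->
  (forall i, finite_set (Xh i) /\ Xh i `<=` X i) ->
  (forall i, finite_set (Dh i) /\ Dh i `<=` D i) ->
  (forall i, 0 <= rho i) ->
  (forall i x, X i x -> Xh i (Pq i x) /\ sqnorm (Pq i x - x) <= rho i ^+ 2) ->
  (* the interconnections are well posed: d = Mc x lies in prod D_i,
     dh = Mc xh lies in prod Dh_i *)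
  (forall x, prod_set X x -> forall i, D i (submxcol (Mc *m x) i)) ->
  (forall xh, prod_set Xh xh -> forall i, Dh i (submxcol (Mc *m xh) i)) ->
  (* expectations are well defined (measurability of the integrands) *)
  (forall i k x xh nu d dh, X i x -> Xh i xh -> D i d -> Dh i dh ->
     measurable_fun [set: Omega]
       (fun w => S i k (f i x nu d (sig i w)) (Pq i (f i xh nu dh (sig i w))))) ->
  (* constants *)
  (forall i, 0 < gamma i) ->
  (forall i, 0 < alpha i < 1) ->
  (forall i, 0 <= varpi i) ->
  (forall i, (Z i)^T = Z i) ->
  (* confidence of each SStF *)
  (forall i, exists2 A : set Theta, measurable A /\
       A `<=` [set th | is_SStF Pn (sig i) (X i) (Xh i) (D i) (Dh i) (f i)
                  (fun x nu d s => Pq i (f i x nu d s))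
                  (S i (kappa i th)) (gamma i) (alpha i) (varpi i) (Z i)]
     & (Pd A >= (1 - (beta1 i + beta2 i))%:E)%E) ->
  (* compositionality LMI *)
  nsd ((col_mx Mc 1%:M)^T *m
        block_mx (\mxdiag_i ulsubmx (Z i)) (mxdiag_rect (fun i => ursubmx (Z i)))
                 (mxdiag_rect (fun i => dlsubmx (Z i))) (\mxdiag_i drsubmx (Z i))
       *m col_mx Mc 1%:M) ->
  exists2 A : set Theta, measurable A /\
     A `<=` [set th | is_SBF Pn (prod_set X) (prod_set Xh)
               (interconnect sig f Mc)
               (interconnect sig (fun i x nu d s => Pq i (f i x nu d s)) Mc)
               (fun x xh => \sum_i S i (kappa i th) (submxcol x i) (submxcol xh i))
               (\sum_i (gamma i)^-1)^-1 (\big[Order.max/0]_i alpha i)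
               (\sum_i varpi i)]
   & (Pd A >= (1 - \sum_i (beta1 i + beta2 i))%:E)%E.
Proof.
move=> M_gt0 f_X Xh_fin Dh_fin _ Pq_Xh coupling_D coupling_Dh S_measurable
  gamma_gt0 alpha_in01 varpi_ge0 _ confidence LMI.
have [A A_spec] := choice (fun i => match confidence i with
  ex_intro2 A mA PA => ex_intro _ A (conj mA PA) end).
have [mAall PAall] := probability_bigcap_ge Pd A (fun i => beta1 i + beta2 i)
  (index_enum 'I_M) (fun i => (A_spec i).1.1) (fun i => (A_spec i).2).
exists (\big[setI/setT]_i A i) => //; split=> // th Ath.
have Pq_f_Xh i xh nu dh s : Xh i xh -> Dh i dh -> Xh i (Pq i (f i xh nu dh s)).
  by move=> Xhxh Dhdh; apply: (Pq_Xh _ _ _).1; apply: f_X;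
    [exact: (Xh_fin i).2 | exact: (Dh_fin i).2].
have SStF_th i := (A_spec i).1.2 th (in_bigcap Ath i (mem_index_enum i)).
exact: (@sum_SStF_is_SBF R dO Omega Pn M n p U Xi sig X Xh D Dh f
  (fun i x nu d s => Pq i (f i x nu d s)) Mc (fun i => S i (kappa i th))
  gamma alpha varpi Z M_gt0 f_X Pq_f_Xh coupling_D coupling_Dh
  (fun i => S_measurable i (kappa i th)) gamma_gt0 alpha_in01 varpi_ge0
  SStF_th LMI).
Qed.
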